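(* Let $\Omega=(-X,X)\times(-Y,Y)$, let $N_x,N_y$ be even positive integers, $h_x=2X/N_x$, $h_y=2Y/N_y$. Suppose $\mathsf{J}\in C^1_{\mathrm{per}}(\Omega)$ and define its grid restriction by $J_{ij}:=\mathsf{J}(x_i,y_j)$, extended periodically in $(i,j)$. Then there is a constant $C>0$, depending on $\mathsf{J}$ (and $\Omega$) but independent of $h_x$ and $h_y$, such that for any periodic grid functions $f,g\in\mathcal{M}_h$ and any $\alpha>0$, $$|\langle J \circledast f, \Delta_N g\rangle|\le \alpha\|f\|_2^2+\frac{C}{\alpha}\|\nabla_N g\|_2^2 .$$
   Context: Grid: $x_i=-X+ih_x$, $y_j=-Y+jh_y$, index set $S_h=\{(i,j):1\le i\le N_x,1\le j\le N_y\}$, $\widehat S_h=\{(k,l)\in\mathbb{Z}^2: -N_x/2+1\le k\le N_x/2,\ -N_y/2+1\le l\le N_y/2\}$. $\mathcal{M}_h$ is the space of real grid functions $f_{ij}$ that are $N_x$-periodic in $i$ and $N_y$-periodic in $j$. Discrete inner product $\langle f,g\rangle=h_xh_y\sum_{(i,j)\in S_h}f_{ij}g_{ij}$ (for vector grid functions, sum of componentwise products), $\|f\|_2=\sqrt{\langle f,f\rangle}$. Discrete Fourier transform $\hat f_{kl}=\sum_{(i,j)\in S_h}f_{ij}e^{-\mathrm{i}k\pi x_i/X}e^{-\mathrm{i}l\pi y_j/Y}$, $(k,l)\in\widehat S_h$, with inverse $f_{ij}=\frac{1}{N_xN_y}\sum_{(k,l)\in\widehat S_h}\hat f_{kl}e^{\mathrm{i}k\pi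 x_i/X}e^{\mathrm{i}l\pi y_j/Y}$. The spectral derivatives $D_x,D_y$ act by multiplying $\hat f_{kl}$ by $\mathrm{i}k\pi/X$ and $\mathrm{i}l\pi/Y$ respectively; $\nabla_N f=(D_xf,D_yf)^T$, $\Delta_N f=D_x^2f+D_y^2f$. Discrete (periodic) convolution: $(J\circledast f)_{ij}=h_xh_y\sum_{(m,n)\in S_h}J_{i-m,j-n}f_{mn}$. *)

From Stdlib Require Import Reals ZArith Lra.
From Coquelicot Require Import Coquelicot.
Open Scope R_scope.

Definition cis (t : R) : C := (cos t, sin t).

Fixpoint sumZ (n : nat) (F : Z -> C) : C :=
  match n with
  | O => RtoC 0
  | S m => Cplus (sumZ m F) (F (Z.of_nat (S m)))
  end.

Fixpoint sumZR (n : nat) (F : Z -> R) : R :=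
  match n with
  | O => 0
  | S m => sumZR m F + F (Z.of_nat (S m))
  end.

Definition hstep (L : R) (N : nat) : R := 2 * L / INR N.
Definition node (L : R) (N : nat) (i : Z) : R := - L + IZR i * hstep L N.

Definition gridR := Z -> Z -> R.
Definition gridC := Z -> Z -> C.

Definition periodic_grid (Nx Ny : nat) (f : gridR) : Prop :=
  forall i j, f (i + Z.of_nat Nx)%Z j = f i j /\ f i (j + Z.of_nat Ny)%Z = f i j.

Definition toC (f : gridR) : gridC := fun i j => RtoC (f i j).

(* sum over S_h = {1..Nx} x {1..Ny} *)
Definition sumS (Nx Ny : nat) (F : Z -> Z -> C) : C :=
  sumZ Nx (fun i => sumZ Ny (fun j => F i j)).
Definition sumSR (Nx Ny : nat) (F : Z -> Z -> R) : R :=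
  sumZR Nx (fun i => sumZR Ny (fun j => F i j)).

(* sum over hat S_h = {-Nx/2+1..Nx/2} x {-Ny/2+1..Ny/2} *)
Definition sumShat (Nx Ny : nat) (F : Z -> Z -> C) : C :=
  sumZ Nx (fun a => sumZ Ny (fun b =>
    F (a - Z.of_nat (Nat.div2 Nx))%Z (b - Z.of_nat (Nat.div2 Ny))%Z)).

Definition dft (X Y : R) (Nx Ny : nat) (u : gridC) (k l : Z) : C :=
  sumS Nx Ny (fun i j =>
    Cmult (u i j)
      (Cmult (cis (- (IZR k * PI * node X Nx i / X)))
             (cis (- (IZR l * PI * node Y Ny j / Y))))).

Definition spec_op (X Y : R) (Nx Ny : nat) (m : Z -> Z -> C) (u : gridC) : gridC :=
  fun i j =>
    Cmult (RtoC (/ (INR Nx * INR Ny)))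
      (sumShat Nx Ny (fun k l =>
         Cmult (Cmult (m k l) (dft X Y Nx Ny u k l))
           (Cmult (cis (IZR k * PI * node X Nx i / X))
                  (cis (IZR l * PI * node Y Ny j / Y))))).

Definition DxN (X Y : R) (Nx Ny : nat) (u : gridC) : gridC :=
  spec_op X Y Nx Ny (fun k _ => (0, IZR k * PI / X)) u.
Definition DyN (X Y : R) (Nx Ny : nat) (u : gridC) : gridC :=
  spec_op X Y Nx Ny (fun _ l => (0, IZR l * PI / Y)) u.

Definition LapN (X Y : R) (Nx Ny : nat) (u : gridC) : gridC :=
  fun i j => Cplus (DxN X Y Nx Ny (DxN X Y Nx Ny u) i j)
                   (DyN X Y Nx Ny (DyN X Y Nx Ny u) i j).

(* discrete inner product (Hermitian; coincides with the real one on real grid functions) *)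
Definition ipN (X Y : R) (Nx Ny : nat) (u v : gridC) : C :=
  Cmult (RtoC (hstep X Nx * hstep Y Ny))
        (sumS Nx Ny (fun i j => Cmult (u i j) (Cconj (v i j)))).

Definition nrm2sq (X Y : R) (Nx Ny : nat) (u : gridC) : R :=
  hstep X Nx * hstep Y Ny * sumSR Nx Ny (fun i j => Cmod (u i j) ^ 2).

Definition grad_nrm2sq (X Y : R) (Nx Ny : nat) (g : gridR) : R :=
  nrm2sq X Y Nx Ny (DxN X Y Nx Ny (toC g)) + nrm2sq X Y Nx Ny (DyN X Y Nx Ny (toC g)).

Definition grid_restr (X Y : R) (Nx Ny : nat) (J : R -> R -> R) : gridR :=
  fun i j => J (node X Nx i) (node Y Ny j).

Definition convN (X Y : R) (Nx Ny : nat) (Jg f : gridR) : gridR :=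
  fun i j => hstep X Nx * hstep Y Ny *
    sumSR Nx Ny (fun m n => Jg (i - m)%Z (j - n)%Z * f m n).

Definition C1per (X Y : R) (J : R -> R -> R) : Prop :=
  (forall x y, J (x + 2 * X) y = J x y /\ J x (y + 2 * Y) = J x y) /\
  exists Jx Jy : R -> R -> R,
    (forall x y, is_derive (fun t => J t y) x (Jx x y)) /\
    (forall x y, is_derive (fun t => J x t) y (Jy x y)) /\
    (forall p : R * R, continuous (fun q : R * R => Jx (fst q) (snd q)) p) /\
    (forall p : R * R, continuous (fun q : R * R => Jy (fst q) (snd q)) p) /\
    (forall p : R * R, continuous (fun q : R * R => J (fst q) (snd q)) p).

From Stdlib Require Import Reals ZArith Lra Lia Psatz List ClassicalEpsilon Classical.
From Coquelicot Require Import Coquelicot.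
Open Scope R_scope.

(* On the grid everything is diagonalised by the discrete Fourier transform.  Writing
   [a_k = k pi / X] and [b_l = l pi / Y], the convolution [J * f] has coefficients
   [h_x h_y (-1)^(k+l) hat J_kl hat f_kl] (periodicity of [J] absorbs the shift), the spectral
   Laplacian multiplies [hat g_kl] by [-(a_k^2 + b_l^2)], and Parseval turns the inner product
   and the norms into sums over the frequencies.  Being C^1 and periodic, [J] is Lipschitz, and
   summation by parts against the root of unity [exp (-2 i pi k / N_x)] gives
   [|a_k| h_x h_y |hat J_kl| <= K] and [|b_l| h_x h_y |hat J_kl| <= K] with [K = 16 X Y Lip J],
   uniformly in the grid.  At each frequency Young's inequality then bounds the summand by
   [alpha |hat f|^2 + K^2 / (2 alpha) (|a_k hat g|^2 + |b_l hat g|^2)], and summing back with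
   Parseval gives the estimate with [C = K^2 / 2 + 1]. *)

Lemma sumZ_ext n F G :
  (forall t, (1 <= t <= Z.of_nat n)%Z -> F t = G t) -> sumZ n F = sumZ n G.
Proof.
  induction n as [|n IH]; intros H; simpl; auto.
  rewrite IH, H; auto; [lia|]. intros; apply H; lia.
Qed.

Lemma sumZR_ext n F G :
  (forall t, (1 <= t <= Z.of_nat n)%Z -> F t = G t) -> sumZR n F = sumZR n G.
Proof.
  induction n as [|n IH]; intros H; simpl; auto.
  rewrite IH, H; auto; [lia|]. intros; apply H; lia.
Qed.

Lemma sumZ_plus n F G : sumZ n (fun t => F t + G t)%C = (sumZ n F + sumZ n G)%C.
Proof. induction n as [|n IH]; simpl; [ring|]. rewrite IH; ring. Qed.

Lemma sumZ_mul_l n c F : sumZ n (fun t => c * F t)%C = (c * sumZ n F)%C.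
Proof. induction n as [|n IH]; simpl; [ring|]. rewrite IH; ring. Qed.

Lemma sumZ_mul_r n c F : sumZ n (fun t => F t * c)%C = (sumZ n F * c)%C.
Proof. induction n as [|n IH]; simpl; [ring|]. rewrite IH; ring. Qed.

Lemma sumZ_const n c : sumZ n (fun _ => c) = (INR n * c)%C.
Proof.
  induction n as [|n IH]; simpl sumZ; [simpl; ring|].
  rewrite IH, S_INR, RtoC_plus; ring.
Qed.

Lemma sumZ_conj n F : Cconj (sumZ n F) = sumZ n (fun t => Cconj (F t)).
Proof.
  induction n as [|n IH]; simpl.
  - unfold Cconj, RtoC; simpl; f_equal; ring.
  - rewrite Cplus_conj, IH; auto.
Qed.

Lemma sumZ_swap n m (F : Z -> Z -> C) :
  sumZ n (fun i => sumZ m (fun j => F i j)) = sumZ m (fun j => sumZ n (fun i => F i j)).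
Proof.
  induction n as [|n IH]; simpl.
  - rewrite (sumZ_const m 0), Cmult_0_r; auto.
  - rewrite IH, <- sumZ_plus; auto.
Qed.

Lemma sumZ_delta n (F : Z -> C) t0 : (1 <= t0 <= Z.of_nat n)%Z ->
  (forall t, (1 <= t <= Z.of_nat n)%Z -> t <> t0 -> F t = RtoC 0) -> sumZ n F = F t0.
Proof.
  induction n as [|n IH]; intros Ht0 H; [simpl in Ht0; lia|].
  change (sumZ (S n) F) with (sumZ n F + F (Z.of_nat (S n)))%C.
  destruct (Z.eq_dec t0 (Z.of_nat (S n))) as [->|Hne].
  - rewrite (sumZ_ext n F (fun _ => RtoC 0)), sumZ_const; [ring|].
    intros; apply H; lia.
  - rewrite IH, (H (Z.of_nat (S n))); [ring|lia|auto|lia|].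
    intros; apply H; lia.
Qed.

Lemma sumZ_sumZ_single n m (F : Z -> Z -> C) i0 j0 :
  (1 <= i0 <= Z.of_nat n)%Z -> (1 <= j0 <= Z.of_nat m)%Z ->
  (forall i j, (1 <= i <= Z.of_nat n)%Z -> (1 <= j <= Z.of_nat m)%Z ->
     i <> i0 \/ j <> j0 -> F i j = RtoC 0) ->
  sumZ n (fun i => sumZ m (fun j => F i j)) = F i0 j0.
Proof.
  intros Hi0 Hj0 H. rewrite (sumZ_delta _ _ i0); auto.
  - apply sumZ_delta; auto.
  - intros i Hi Hne. rewrite (sumZ_ext _ _ (fun _ => RtoC 0)), sumZ_const; [ring|].
    intros; apply H; auto.
Qed.

Lemma RtoC_sumZR n F : RtoC (sumZR n F) = sumZ n (fun t => RtoC (F t)).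
Proof. induction n as [|n IH]; simpl; auto. rewrite RtoC_plus, IH; auto. Qed.

Lemma Cmod_sumZ n F : Cmod (sumZ n F) <= sumZR n (fun t => Cmod (F t)).
Proof.
  induction n as [|n IH]; simpl; [rewrite Cmod_0; lra|].
  eapply Rle_trans; [apply Cmod_triangle|lra].
Qed.

Lemma sumZR_plus n F G : sumZR n (fun t => F t + G t) = sumZR n F + sumZR n G.
Proof. induction n as [|n IH]; simpl; [ring|]. rewrite IH; ring. Qed.

Lemma sumZR_mul_l n c F : sumZR n (fun t => c * F t) = c * sumZR n F.
Proof. induction n as [|n IH]; simpl; [ring|]. rewrite IH; ring. Qed.

Lemma sumZR_const n c : sumZR n (fun _ => c) = INR n * c.
Proof. induction n as [|n IH]; simpl sumZR; [simpl; ring|]. rewrite IH, S_INR; ring. Qed.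

Lemma sumZR_le n F G :
  (forall t, (1 <= t <= Z.of_nat n)%Z -> F t <= G t) -> sumZR n F <= sumZR n G.
Proof.
  induction n as [|n IH]; intros H; simpl; [lra|].
  apply Rplus_le_compat; [apply IH; intros|]; apply H; lia.
Qed.

Lemma sumZ_succ_l n F : sumZ (S n) F = (F 1%Z + sumZ n (fun t => F (t + 1)%Z))%C.
Proof.
  induction n as [|n IH]; [simpl; ring|].
  change (sumZ (S (S n)) F) with (sumZ (S n) F + F (Z.of_nat (S (S n))))%C.
  rewrite IH. simpl sumZ at 2. rewrite Cplus_assoc. repeat f_equal. lia.
Qed.

Lemma sumZ_shift1 n G : (forall t, G (t + Z.of_nat n)%Z = G t) ->
  sumZ n (fun t => G (t + 1)%Z) = sumZ n G.
Proof.
  intros HG.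
  assert (H := sumZ_succ_l n G).
  change (sumZ (S n) G) with (sumZ n G + G (Z.of_nat (S n)))%C in H.
  replace (G (Z.of_nat (S n))) with (G 1%Z) in H by (rewrite <- (HG 1%Z); f_equal; lia).
  apply (f_equal (fun z => z - G 1%Z)%C) in H.
  replace (sumZ n G + G 1%Z - G 1%Z)%C with (sumZ n G) in H by ring.
  rewrite H; ring.
Qed.

Lemma sumZ_shift n G s : (forall t, G (t + Z.of_nat n)%Z = G t) ->
  sumZ n (fun t => G (t + s)%Z) = sumZ n G.
Proof.
  assert (Hnat : forall G p, (forall t, G (t + Z.of_nat n)%Z = G t) ->
            sumZ n (fun t => G (t + Z.of_nat p)%Z) = sumZ n G).
  { clear G s. intros G p HG. induction p as [|p IH].
    - apply sumZ_ext; intros; f_equal; lia.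
    - rewrite <- IH, <- (sumZ_shift1 n (fun t => G (t + Z.of_nat p)%Z)).
      + apply sumZ_ext; intros; f_equal; lia.
      + intros t. rewrite <- (HG (t + Z.of_nat p)%Z). f_equal; lia. }
  intros HG. destruct (Z.le_ge_cases 0 s).
  - replace s with (Z.of_nat (Z.to_nat s)) by lia. apply Hnat; auto.
  - rewrite <- (Hnat (fun t => G (t + s)%Z) (Z.to_nat (- s))).
    + apply sumZ_ext; intros; f_equal; lia.
    + intros t. rewrite <- (HG (t + s)%Z). f_equal; lia.
Qed.

(** * The exponential [cis] and roots of unity *)

Lemma cis_add a b : (cis a * cis b)%C = cis (a + b).
Proof. unfold cis, Cmult; simpl. rewrite cos_plus, sin_plus. f_equal; ring. Qed.

Lemma cis_conj t : Cconj (cis t) = cis (- t).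
Proof. unfold cis, Cconj; simpl. rewrite cos_neg, sin_neg; auto. Qed.

Lemma Cmod_cis t : Cmod (cis t) = 1.
Proof.
  unfold Cmod, cis; simpl. assert (H := sin2_cos2 t). unfold Rsqr in H.
  replace (cos t * (cos t * 1) + sin t * (sin t * 1)) with 1 by lra. apply sqrt_1.
Qed.

Lemma cis_0 : cis 0 = RtoC 1.
Proof. unfold cis, RtoC. rewrite cos_0, sin_0; auto. Qed.

Lemma cis_2PI_mult z : cis (2 * PI * IZR z) = RtoC 1.
Proof.
  unfold cis, RtoC. replace (2 * PI * IZR z) with (2 * (IZR z * PI)) by ring.
  rewrite cos_2a_sin, sin_2a, sin_eq_0_1 by (exists z; ring). f_equal; ring.
Qed.

Lemma cis_add_2PI_mult t z : cis (t + 2 * PI * IZR z) = cis t.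
Proof. rewrite <- cis_add, cis_2PI_mult. apply Cmult_1_r. Qed.

Lemma cis_2PI_frac_neq_1 n d : (d <> 0)%Z -> (Z.abs d < Z.of_nat n)%Z ->
  cis (2 * PI * IZR d / INR n) <> RtoC 1.
Proof.
  intros Hd Hdn H. injection H as Hc _.
  assert (HnR : INR n <> 0) by (apply not_0_INR; lia).
  replace (2 * PI * IZR d / INR n) with (2 * (IZR d / INR n * PI)) in Hc by (field; auto).
  rewrite cos_2a_sin in Hc.
  destruct (sin_eq_0_0 (IZR d / INR n * PI)) as [q Hq]; [nra|].
  assert (Hdq : IZR d = IZR q * INR n).
  { apply Rmult_eq_reg_r with PI; [|apply PI_neq0].
    transitivity (IZR d / INR n * PI * INR n); [field; auto|]. rewrite Hq; ring. }
  rewrite INR_IZR_INZ, <- mult_IZR in Hdq. apply eq_IZR in Hdq. subst d.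
  rewrite Z.abs_mul, (Z.abs_eq (Z.of_nat n)) in Hdn by lia.
  assert (q <> 0)%Z by (intros ->; lia). nia.
Qed.

(* Shifting the index multiplies the sum by [cis th] but, by periodicity, leaves it unchanged. *)
Lemma sumZ_cis_geometric n c th : cis th <> RtoC 1 -> cis (th * INR n) = RtoC 1 ->
  sumZ n (fun t => cis (c + th * IZR t)) = RtoC 0.
Proof.
  intros Hth Hn.
  set (Sm := sumZ n (fun t => cis (c + th * IZR t))).
  assert (HS : (Sm * cis th)%C = Sm).
  { unfold Sm. rewrite <- sumZ_mul_r.
    rewrite <- (sumZ_shift1 n (fun t => cis (c + th * IZR t))).
    - apply sumZ_ext; intros. rewrite cis_add, plus_IZR. f_equal; ring.
    - intros t. rewrite <- (Cmult_1_r (cis (c + th * IZR t))), <- Hn, cis_add,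
        plus_IZR, <- INR_IZR_INZ. f_equal; ring. }
  assert (Hne : (cis th - 1)%C <> RtoC 0).
  { intros H. apply Hth. replace (cis th) with (cis th - 1 + 1)%C by ring. rewrite H; ring. }
  assert (H0 : (Sm * (cis th - 1))%C = RtoC 0)
    by (replace (Sm * (cis th - 1))%C with (Sm * cis th - Sm)%C by ring; rewrite HS; ring).
  replace Sm with (Sm * (cis th - 1) / (cis th - 1))%C by (field; auto).
  rewrite H0. field; auto.
Qed.

Lemma sumZ_cis_2PI_frac n d c : (d <> 0)%Z -> (Z.abs d < Z.of_nat n)%Z ->
  sumZ n (fun t => cis (c + (2 * PI * IZR d / INR n) * IZR t)) = RtoC 0.
Proof.
  intros Hd Hdn. apply sumZ_cis_geometric; [apply cis_2PI_frac_neq_1; auto|].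
  rewrite <- (cis_2PI_mult d). f_equal. field. apply not_0_INR; lia.
Qed.

(** * Discrete Fourier analysis on the grid *)

Notation wave L N k i := (cis (IZR k * PI * node L N i / L)).
Notation cwave L N k i := (cis (- (IZR k * PI * node L N i / L))).

Lemma wave_conj L N k i : Cconj (wave L N k i) = cwave L N k i.
Proof. apply cis_conj. Qed.

Lemma wave_orth_freq L N k k' : 0 < L -> (0 < N)%nat -> (Z.abs (k - k') < Z.of_nat N)%Z ->
  sumZ N (fun i => wave L N k i * cwave L N k' i)%C =
  if Z.eq_dec k k' then RtoC (INR N) else RtoC 0.
Proof.
  intros HL HN Hk. assert (HNR : INR N <> 0) by (apply not_0_INR; lia).
  destruct (Z.eq_dec k k') as [<-|Hne].
  - rewrite (sumZ_ext _ _ (fun _ => RtoC 1)), sumZ_const; [ring|].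
    intros. rewrite cis_add, <- cis_0. f_equal; ring.
  - rewrite <- (sumZ_cis_2PI_frac N (k - k') (- (IZR (k - k') * PI))); try lia.
    apply sumZ_ext; intros. rewrite cis_add. f_equal.
    unfold node, hstep. rewrite minus_IZR. field. lra.
Qed.

Lemma wave_orth_space L N s i i' : 0 < L -> (0 < N)%nat ->
  (1 <= i <= Z.of_nat N)%Z -> (1 <= i' <= Z.of_nat N)%Z ->
  sumZ N (fun t => wave L N (t - s) i * cwave L N (t - s) i')%C =
  if Z.eq_dec i i' then RtoC (INR N) else RtoC 0.
Proof.
  intros HL HN Hi Hi'. assert (HNR : INR N <> 0) by (apply not_0_INR; lia).
  destruct (Z.eq_dec i i') as [<-|Hne].
  - rewrite (sumZ_ext _ _ (fun _ => RtoC 1)), sumZ_const; [ring|].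
    intros. rewrite cis_add, <- cis_0. f_equal; ring.
  - rewrite <- (sumZ_cis_2PI_frac N (i - i') (- (IZR s * (2 * PI * IZR (i - i') / INR N))));
      try lia.
    apply sumZ_ext; intros. rewrite cis_add. f_equal.
    unfold node, hstep. rewrite !minus_IZR. field. lra.
Qed.

Lemma sumZ_sumZ_mul n m c (A B : Z -> C) :
  sumZ n (fun i => sumZ m (fun j => c * (A i * B j)))%C = (c * (sumZ n A * sumZ m B))%C.
Proof.
  transitivity (sumZ n (fun i => A i * (c * sumZ m B)))%C.
  - apply sumZ_ext; intros. rewrite <- !sumZ_mul_l. apply sumZ_ext; intros; ring.
  - rewrite sumZ_mul_r; ring.
Qed.

Lemma sumZ_swap4 n m p q (F : Z -> Z -> Z -> Z -> C) :
  sumZ n (fun i => sumZ m (fun j => sumZ p (fun a => sumZ q (fun b => F i j a b)))) =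
  sumZ p (fun a => sumZ q (fun b => sumZ n (fun i => sumZ m (fun j => F i j a b)))).
Proof.
  transitivity (sumZ n (fun i => sumZ p (fun a => sumZ q (fun b =>
                  sumZ m (fun j => F i j a b))))).
  - apply sumZ_ext; intros. rewrite sumZ_swap. apply sumZ_ext; intros. apply sumZ_swap.
  - rewrite sumZ_swap. apply sumZ_ext; intros. apply sumZ_swap.
Qed.

Definition inShat (N M : nat) (k l : Z) : Prop :=
  (1 - Z.of_nat (Nat.div2 N) <= k <= Z.of_nat N - Z.of_nat (Nat.div2 N))%Z /\
  (1 - Z.of_nat (Nat.div2 M) <= l <= Z.of_nat M - Z.of_nat (Nat.div2 M))%Z.

Lemma inShat_bound N M k l : Nat.Even N -> Nat.Even M -> inShat N M k l ->
  (2 * Z.abs k <= Z.of_nat N)%Z /\ (2 * Z.abs l <= Z.of_nat M)%Z.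
Proof. intros [a ->] [b ->] [Hk Hl]. rewrite !Nat.div2_double in *. lia. Qed.

Definition sumShatR (N M : nat) (F : Z -> Z -> R) : R :=
  sumZR N (fun a => sumZR M (fun b =>
    F (a - Z.of_nat (Nat.div2 N))%Z (b - Z.of_nat (Nat.div2 M))%Z)).

Section DoubleSums.
Variables N M : nat.

Lemma sumS_ext F G : (forall i j, F i j = G i j) -> sumS N M F = sumS N M G.
Proof. intros H. apply sumZ_ext; intros; apply sumZ_ext; auto. Qed.

Lemma sumS_ext_in (F G : Z -> Z -> C) :
  (forall i j, (1 <= i <= Z.of_nat N)%Z -> (1 <= j <= Z.of_nat M)%Z -> F i j = G i j) ->
  sumS N M F = sumS N M G.
Proof. intros H. apply sumZ_ext; intros; apply sumZ_ext; auto. Qed.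

Lemma sumShat_ext F G : (forall k l, F k l = G k l) -> sumShat N M F = sumShat N M G.
Proof. intros H. apply sumZ_ext; intros; apply sumZ_ext; auto. Qed.

Lemma sumShat_ext_in (F G : Z -> Z -> C) :
  (forall k l, inShat N M k l -> F k l = G k l) -> sumShat N M F = sumShat N M G.
Proof. intros H. apply sumZ_ext; intros; apply sumZ_ext; intros; apply H; split; lia. Qed.

Lemma sumS_mul_l F c : (c * sumS N M F)%C = sumS N M (fun i j => c * F i j)%C.
Proof.
  unfold sumS. rewrite <- sumZ_mul_l. apply sumZ_ext; intros. symmetry; apply sumZ_mul_l.
Qed.

Lemma sumS_mul_r F c : (sumS N M F * c)%C = sumS N M (fun i j => F i j * c)%C.
Proof.
  unfold sumS. rewrite <- sumZ_mul_r. apply sumZ_ext; intros. symmetry; apply sumZ_mul_r.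
Qed.

Lemma sumShat_mul_l F c : (c * sumShat N M F)%C = sumShat N M (fun k l => c * F k l)%C.
Proof.
  unfold sumShat. rewrite <- sumZ_mul_l. apply sumZ_ext; intros. symmetry; apply sumZ_mul_l.
Qed.

Lemma sumShat_mul_r F c : (sumShat N M F * c)%C = sumShat N M (fun k l => F k l * c)%C.
Proof.
  unfold sumShat. rewrite <- sumZ_mul_r. apply sumZ_ext; intros. symmetry; apply sumZ_mul_r.
Qed.

Lemma sumShat_plus F G :
  sumShat N M (fun k l => F k l + G k l)%C = (sumShat N M F + sumShat N M G)%C.
Proof. unfold sumShat. rewrite <- sumZ_plus. apply sumZ_ext; intros. apply sumZ_plus. Qed.

Lemma sumShat_conj F : Cconj (sumShat N M F) = sumShat N M (fun k l => Cconj (F k l)).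
Proof. unfold sumShat. rewrite sumZ_conj. apply sumZ_ext; intros. apply sumZ_conj. Qed.

Lemma sumS_sumShat_swap F :
  sumS N M (fun i j => sumShat N M (fun k l => F i j k l)) =
  sumShat N M (fun k l => sumS N M (fun i j => F i j k l)).
Proof. apply sumZ_swap4. Qed.

Lemma sumS_swap F :
  sumS N M (fun i j => sumS N M (fun m n => F i j m n)) =
  sumS N M (fun m n => sumS N M (fun i j => F i j m n)).
Proof. apply sumZ_swap4. Qed.

Lemma RtoC_sumSR F : RtoC (sumSR N M F) = sumS N M (fun i j => RtoC (F i j)).
Proof. unfold sumSR, sumS. rewrite RtoC_sumZR. apply sumZ_ext; intros. apply RtoC_sumZR. Qed.

Lemma RtoC_sumShatR F : RtoC (sumShatR N M F) = sumShat N M (fun k l => RtoC (F k l)).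
Proof. unfold sumShatR, sumShat. rewrite RtoC_sumZR. apply sumZ_ext; intros. apply RtoC_sumZR. Qed.

Lemma Cmod_sumShat F : Cmod (sumShat N M F) <= sumShatR N M (fun k l => Cmod (F k l)).
Proof.
  eapply Rle_trans; [apply Cmod_sumZ|]. apply sumZR_le; intros. apply Cmod_sumZ.
Qed.

Lemma sumShatR_le F G :
  (forall k l, inShat N M k l -> F k l <= G k l) -> sumShatR N M F <= sumShatR N M G.
Proof. intros H. apply sumZR_le; intros; apply sumZR_le; intros; apply H; split; lia. Qed.

Lemma sumShatR_plus F G :
  sumShatR N M (fun k l => F k l + G k l) = sumShatR N M F + sumShatR N M G.
Proof. unfold sumShatR. rewrite <- sumZR_plus. apply sumZR_ext; intros. apply sumZR_plus. Qed.

Lemma sumShatR_mul_l c F : sumShatR N M (fun k l => c * F k l) = c * sumShatR N M F.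
Proof. unfold sumShatR. rewrite <- sumZR_mul_l. apply sumZR_ext; intros. apply sumZR_mul_l. Qed.

End DoubleSums.

Section GridFourier.
Variables (X Y : R) (N M : nat).
Hypotheses (HX : 0 < X) (HY : 0 < Y) (HN : (0 < N)%nat) (HM : (0 < M)%nat).

Let NM_neq0 : INR N * INR M <> 0.
Proof. apply Rmult_integral_contrapositive; split; apply not_0_INR; lia. Qed.

Lemma sumS_waves_coef (c : Z -> Z -> C) k l : inShat N M k l ->
  sumS N M (fun i j =>
    sumShat N M (fun k' l' => c k' l' * (wave X N k' i * wave Y M l' j)) *
    (cwave X N k i * cwave Y M l j))%C =
  (RtoC (INR N * INR M) * c k l)%C.
Proof.
  intros [Hk Hl].
  transitivity (sumShat N M (fun k' l' => c k' l' *
    ((if Z.eq_dec k' k then RtoC (INR N) else 0) *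
     (if Z.eq_dec l' l then RtoC (INR M) else 0))))%C.
  - rewrite (sumS_ext _ _ _ (fun i j => sumShat N M (fun k' l' =>
      c k' l' * (wave X N k' i * wave Y M l' j) * (cwave X N k i * cwave Y M l j))))%C
      by (intros; apply sumShat_mul_r).
    rewrite sumS_sumShat_swap. apply sumShat_ext_in; intros k' l' [Hk' Hl'].
    rewrite <- (wave_orth_freq X N k' k), <- (wave_orth_freq Y M l' l); try lia; auto.
    unfold sumS. rewrite <- sumZ_sumZ_mul.
    apply sumZ_ext; intros; apply sumZ_ext; intros; ring.
  - unfold sumShat.
    rewrite (sumZ_sumZ_single _ _ _ (k + Z.of_nat (Nat.div2 N)) (l + Z.of_nat (Nat.div2 M)));
      try lia.
    + replace (k + Z.of_nat (Nat.div2 N) - Z.of_nat (Nat.div2 N))%Z with k by lia.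
      replace (l + Z.of_nat (Nat.div2 M) - Z.of_nat (Nat.div2 M))%Z with l by lia.
      destruct (Z.eq_dec k k), (Z.eq_dec l l); try congruence.
      rewrite RtoC_mult; ring.
    + intros a b _ _ Hab.
      destruct (Z.eq_dec (a - Z.of_nat (Nat.div2 N)) k),
               (Z.eq_dec (b - Z.of_nat (Nat.div2 M)) l); try lia; ring.
Qed.

Lemma sumShat_dft_waves u i j :
  (1 <= i <= Z.of_nat N)%Z -> (1 <= j <= Z.of_nat M)%Z ->
  sumShat N M (fun k l => dft X Y N M u k l * (wave X N k i * wave Y M l j))%C =
  (RtoC (INR N * INR M) * u i j)%C.
Proof.
  intros Hi Hj. unfold dft.
  rewrite (sumShat_ext _ _ _ (fun k l => sumS N M (fun i' j' =>
    u i' j' * (cwave X N k i' * cwave Y M l j') * (wave X N k i * wave Y M l j))))%C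
    by (intros; apply sumS_mul_r).
  rewrite <- sumS_sumShat_swap.
  transitivity (sumS N M (fun i' j' => u i' j' *
    ((if Z.eq_dec i i' then RtoC (INR N) else 0) *
     (if Z.eq_dec j j' then RtoC (INR M) else 0))))%C.
  - apply sumS_ext_in; intros i' j' Hi' Hj'.
    rewrite <- (wave_orth_space X N (Z.of_nat (Nat.div2 N)) i i'),
            <- (wave_orth_space Y M (Z.of_nat (Nat.div2 M)) j j'); auto.
    unfold sumShat. rewrite <- sumZ_sumZ_mul.
    apply sumZ_ext; intros; apply sumZ_ext; intros; ring.
  - unfold sumS. rewrite (sumZ_sumZ_single _ _ _ i j); auto.
    + destruct (Z.eq_dec i i), (Z.eq_dec j j); try congruence.
      rewrite RtoC_mult; ring.
    + intros a b _ _ Hab. destruct (Z.eq_dec i a), (Z.eq_dec j b); try lia; ring.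
Qed.

Lemma dft_spec_op m u k l : inShat N M k l ->
  dft X Y N M (spec_op X Y N M m u) k l = (m k l * dft X Y N M u k l)%C.
Proof.
  intros Hkl. unfold dft at 1, spec_op.
  rewrite (sumS_ext _ _ _ (fun i j => RtoC (/ (INR N * INR M)) *
    (sumShat N M (fun k' l' => (m k' l' * dft X Y N M u k' l') *
       (wave X N k' i * wave Y M l' j)) * (cwave X N k i * cwave Y M l j))))%C
    by (intros; ring).
  rewrite <- sumS_mul_l, sumS_waves_coef by auto.
  rewrite Cmult_assoc, <- RtoC_mult, Rinv_l, Cmult_1_l; auto.
Qed.

Lemma spec_op_1 u i j : (1 <= i <= Z.of_nat N)%Z -> (1 <= j <= Z.of_nat M)%Z ->
  spec_op X Y N M (fun _ _ => RtoC 1) u i j = u i j.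
Proof.
  intros Hi Hj. unfold spec_op.
  rewrite (sumShat_ext _ _ _ (fun k l => dft X Y N M u k l * (wave X N k i * wave Y M l j)))%C
    by (intros; ring).
  rewrite sumShat_dft_waves, Cmult_assoc, <- RtoC_mult, Rinv_l, Cmult_1_l; auto.
Qed.

Lemma ipN_spec_op u m v :
  ipN X Y N M u (spec_op X Y N M m v) =
  (RtoC (hstep X N * hstep Y M / (INR N * INR M)) *
   sumShat N M (fun k l => Cconj (m k l * dft X Y N M v k l) * dft X Y N M u k l))%C.
Proof.
  unfold ipN, Rdiv. rewrite (RtoC_mult (hstep X N * hstep Y M)), <- Cmult_assoc. f_equal.
  rewrite (sumS_ext _ _ _ (fun i j => RtoC (/ (INR N * INR M)) * sumShat N M (fun k l =>
    Cconj (m k l * dft X Y N M v k l) * (u i j * (cwave X N k i * cwave Y M l j)))))%C.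
  - rewrite <- sumS_mul_l, sumS_sumShat_swap. f_equal.
    apply sumShat_ext; intros k l. rewrite <- sumS_mul_l. reflexivity.
  - intros i j. unfold spec_op.
    rewrite Cmult_conj, sumShat_conj, sumShat_mul_l, sumShat_mul_l, Cmult_comm, sumShat_mul_r.
    replace (Cconj (RtoC (/ (INR N * INR M)))) with (RtoC (/ (INR N * INR M)))
      by (unfold Cconj, RtoC; simpl; f_equal; ring).
    apply sumShat_ext; intros k l. rewrite !Cmult_conj, !wave_conj. ring.
Qed.

Lemma ipN_ext_in u v v' :
  (forall i j, (1 <= i <= Z.of_nat N)%Z -> (1 <= j <= Z.of_nat M)%Z -> v i j = v' i j) ->
  ipN X Y N M u v = ipN X Y N M u v'.
Proof.
  intros H. unfold ipN. f_equal. apply sumS_ext_in; intros. rewrite H; auto.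
Qed.

Lemma RtoC_nrm2sq u : RtoC (nrm2sq X Y N M u) = ipN X Y N M u u.
Proof.
  unfold nrm2sq, ipN. rewrite RtoC_mult, RtoC_sumSR. f_equal.
  apply sumS_ext; intros. apply Cmod2_conj.
Qed.

Lemma nrm2sq_spec_op m u :
  nrm2sq X Y N M (spec_op X Y N M m u) =
  hstep X N * hstep Y M / (INR N * INR M) *
  sumShatR N M (fun k l => Cmod (m k l * dft X Y N M u k l) ^ 2).
Proof.
  apply RtoC_inj. rewrite RtoC_nrm2sq, ipN_spec_op, RtoC_mult, RtoC_sumShatR. f_equal.
  apply sumShat_ext_in; intros k l Hkl.
  rewrite dft_spec_op, Cmod2_conj by auto. apply Cmult_comm.
Qed.

Lemma nrm2sq_dft u :
  nrm2sq X Y N M u =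
  hstep X N * hstep Y M / (INR N * INR M) * sumShatR N M (fun k l => Cmod (dft X Y N M u k l) ^ 2).
Proof.
  apply RtoC_inj.
  rewrite RtoC_nrm2sq, (ipN_ext_in u u (spec_op X Y N M (fun _ _ => RtoC 1) u))
    by (intros; rewrite spec_op_1; auto).
  rewrite ipN_spec_op, RtoC_mult, RtoC_sumShatR. f_equal.
  apply sumShat_ext; intros k l. rewrite Cmod2_conj, Cmult_1_l. apply Cmult_comm.
Qed.

Lemma spec_op_ext_in m m' u i j : (forall k l, inShat N M k l -> m k l = m' k l) ->
  spec_op X Y N M m u i j = spec_op X Y N M m' u i j.
Proof. intros H. unfold spec_op. f_equal. apply sumShat_ext_in; intros. rewrite H; auto. Qed.

Lemma spec_op_comp m1 m2 u i j :
  spec_op X Y N M m1 (spec_op X Y N M m2 u) i j =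
  spec_op X Y N M (fun k l => m1 k l * m2 k l)%C u i j.
Proof.
  unfold spec_op at 1 3. f_equal. apply sumShat_ext_in; intros.
  rewrite dft_spec_op by auto. ring.
Qed.

Lemma spec_op_plus m1 m2 u i j :
  (spec_op X Y N M m1 u i j + spec_op X Y N M m2 u i j)%C =
  spec_op X Y N M (fun k l => m1 k l + m2 k l)%C u i j.
Proof.
  unfold spec_op. rewrite <- Cmult_plus_distr_l, <- sumShat_plus. f_equal.
  apply sumShat_ext; intros. ring.
Qed.

Lemma LapN_spec_op v i j :
  LapN X Y N M v i j =
  spec_op X Y N M (fun k l => RtoC (- ((IZR k * PI / X) ^ 2 + (IZR l * PI / Y) ^ 2))) v i j.
Proof.
  unfold LapN, DxN, DyN. rewrite !spec_op_comp, spec_op_plus.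
  apply spec_op_ext_in; intros. unfold RtoC, Cmult, Cplus; simpl. f_equal; ring.
Qed.

End GridFourier.

(** * The convolution theorem *)

Lemma node_add_period L N i : (0 < N)%nat -> node L N (i + Z.of_nat N)%Z = node L N i + 2 * L.
Proof.
  intros HN. unfold node, hstep. rewrite plus_IZR, <- INR_IZR_INZ. field.
  apply not_0_INR; lia.
Qed.

Lemma cwave_add_period L N k i : 0 < L -> (0 < N)%nat ->
  cwave L N k (i + Z.of_nat N)%Z = cwave L N k i.
Proof.
  intros HL HN. rewrite node_add_period by auto.
  rewrite <- (cis_add_2PI_mult (- (IZR k * PI * node L N i / L)) (- k)). f_equal.
  rewrite opp_IZR. field. lra.
Qed.

(* The nodes start at [-L], so [x_i = x_(i-m) + x_m + L]: splitting costs a sign [(-1)^k]. *)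
Lemma cwave_split L N k i m : 0 < L -> (0 < N)%nat ->
  cwave L N k i = (cwave L N k (i - m) * cwave L N k m * cis (- (IZR k * PI)))%C.
Proof.
  intros HL HN. rewrite !cis_add. f_equal. unfold node, hstep. rewrite minus_IZR. field.
  split; [apply not_0_INR; lia|lra].
Qed.

Lemma sumS_shift N M (G : Z -> Z -> C) m n :
  (forall i j, G (i + Z.of_nat N)%Z j = G i j) -> (forall i j, G i (j + Z.of_nat M)%Z = G i j) ->
  sumS N M (fun i j => G (i - m)%Z (j - n)%Z) = sumS N M G.
Proof.
  intros HGx HGy. unfold sumS.
  transitivity (sumZ N (fun i => sumZ M (fun j => G (i - m)%Z j))).
  - apply sumZ_ext; intros. apply (sumZ_shift M (fun j => G (t - m)%Z j) (- n)). auto.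
  - rewrite !(sumZ_swap N M). apply sumZ_ext; intros.
    apply (sumZ_shift N (fun i => G i t) (- m)). auto.
Qed.

Section Convolution.
Variables (X Y : R) (N M : nat).
Hypotheses (HX : 0 < X) (HY : 0 < Y) (HN : (0 < N)%nat) (HM : (0 < M)%nat).

Lemma dft_convN (Jg f : gridR) k l :
  (forall i j, Jg (i + Z.of_nat N)%Z j = Jg i j) ->
  (forall i j, Jg i (j + Z.of_nat M)%Z = Jg i j) ->
  dft X Y N M (toC (convN X Y N M Jg f)) k l =
  (RtoC (hstep X N * hstep Y M) * (cis (- (IZR k * PI)) * cis (- (IZR l * PI))) *
   (dft X Y N M (toC Jg) k l * dft X Y N M (toC f) k l))%C.
Proof.
  intros HJx HJy. unfold dft at 1, toC at 1, convN.
  set (c := (RtoC (hstep X N * hstep Y M) * (cis (- (IZR k * PI)) * cis (- (IZR l * PI))))%C).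
  set (G := fun i j => (RtoC (Jg i j) * (cwave X N k i * cwave Y M l j))%C).
  set (F := fun m n => (c * (RtoC (f m n) * (cwave X N k m * cwave Y M l n)))%C).
  transitivity (sumS N M (fun i j => sumS N M (fun m n => F m n * G (i - m)%Z (j - n)%Z)))%C.
  - apply sumS_ext; intros i j.
    rewrite RtoC_mult, RtoC_sumSR, sumS_mul_l, sumS_mul_r.
    apply sumS_ext; intros m n. unfold F, G, c.
    rewrite (cwave_split X N k i m), (cwave_split Y M l j n), (RtoC_mult (Jg _ _)) by auto.
    ring.
  - rewrite sumS_swap.
    transitivity (sumS N M (fun m n => F m n * sumS N M G))%C.
    + apply sumS_ext; intros m n. rewrite sumS_mul_l.
      rewrite <- (sumS_shift N M (fun i j => F m n * G i j)%C m n); auto.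
      * intros. unfold G. rewrite HJx, cwave_add_period; auto.
      * intros. unfold G. rewrite HJy, cwave_add_period; auto.
    + rewrite <- sumS_mul_r. unfold dft, toC, F. rewrite <- sumS_mul_l. fold G. ring.
Qed.

End Convolution.

(** * Decay of the Fourier coefficients of a Lipschitz kernel *)

Lemma sin_ge_quarter u : 0 <= u <= PI / 2 -> u / 4 <= sin u.
Proof.
  intros Hu. assert (H4 := PI_4). assert (H3 := PI2_3_2).
  destruct (SIN u) as [H _]; try lra.
  replace (sin_lb u) with (u - u ^ 3 / 6 + u ^ 5 / 120 - u ^ 7 / 5040) in H
    by (unfold sin_lb, sin_approx, sin_term; simpl; field).
  assert (0 <= u * u <= 4) by nra.
  assert (u ^ 3 / 6 <= 2 / 3 * u) by nra.
  assert (u ^ 7 / 5040 <= u ^ 5 / 120) by (assert (0 <= u ^ 5) by (apply pow_le; lra); nra).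
  lra.
Qed.

Lemma Rabs_sin_ge_quarter t : Rabs t <= PI / 2 -> Rabs t / 4 <= Rabs (sin t).
Proof.
  intros Ht. destruct (Rle_dec 0 t).
  - rewrite !Rabs_pos_eq in *; auto.
    + apply sin_ge_quarter; lra.
    + apply sin_ge_0; lra.
  - rewrite Rabs_left in * by lra.
    replace (sin t) with (- sin (- t)) by (rewrite sin_neg; ring).
    rewrite Rabs_Ropp, Rabs_pos_eq.
    + apply sin_ge_quarter; lra.
    + apply sin_ge_0; lra.
Qed.

Lemma Cmod_1_minus_cis t : Cmod (1 - cis (- (2 * t)))%C = 2 * Rabs (sin t).
Proof.
  transitivity (sqrt (Rsqr (2 * sin t))).
  - unfold Cmod, cis; simpl. f_equal.
    rewrite cos_neg, sin_neg, cos_2a_sin, sin_2a.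
    assert (H := sin2_cos2 t). unfold Rsqr in *.
    transitivity (4 * (sin t * sin t) * (sin t * sin t + cos t * cos t)); [ring|].
    rewrite H; ring.
  - rewrite sqrt_Rsqr_abs, Rabs_mult, (Rabs_pos_eq 2); lra.
Qed.

Lemma Cmod_1_minus_cis_lower N k : (0 < N)%nat -> (2 * Z.abs k <= Z.of_nat N)%Z ->
  PI * Rabs (IZR k) / (2 * INR N) <= Cmod (1 - cis (- (2 * PI * IZR k / INR N)))%C.
Proof.
  intros HN Hk. assert (HNR : 0 < INR N) by (apply lt_0_INR; lia). assert (HPI := PI_RGT_0).
  set (t := PI * IZR k / INR N).
  assert (Habs : Rabs t = PI * Rabs (IZR k) / INR N).
  { unfold t, Rdiv. rewrite !Rabs_mult, (Rabs_pos_eq PI), (Rabs_pos_eq (/ INR N)); try lra.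
    left; apply Rinv_0_lt_compat; auto. }
  assert (Hkn : 2 * Rabs (IZR k) <= INR N).
  { rewrite INR_IZR_INZ, Rabs_Zabs, <- mult_IZR. apply IZR_le; auto. }
  replace (2 * PI * IZR k / INR N) with (2 * t) by (unfold t; field; lra).
  rewrite Cmod_1_minus_cis.
  assert (Rabs t / 4 <= Rabs (sin t)).
  { apply Rabs_sin_ge_quarter. rewrite Habs.
    apply Rmult_le_reg_r with (INR N); auto. unfold Rdiv. rewrite Rmult_assoc, Rinv_l; nra. }
  replace (PI * Rabs (IZR k) / (2 * INR N)) with (Rabs t / 2) by (rewrite Habs; field; lra).
  lra.
Qed.

(* Abel summation: multiplying by [1 - w] turns the sum into one of first differences. *)
Lemma abel_summation_bound N (a : Z -> R) (e : Z -> C) w :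
  (forall i, a (i + Z.of_nat N)%Z = a i) -> (forall i, e (i + Z.of_nat N)%Z = e i) ->
  (forall i, e (i + 1)%Z = (e i * w)%C) -> (forall i, Cmod (e i) = 1) -> Cmod w = 1 ->
  Cmod (sumZ N (fun i => a i * e i)%C) * Cmod (1 - w)%C <=
  sumZR N (fun i => Rabs (a (i + 1)%Z - a i)).
Proof.
  intros Ha He Hw He1 Hw1.
  set (S := sumZ N (fun i => a i * e i)%C).
  assert (Hshift : sumZ N (fun i => a (i + 1)%Z * e (i + 1)%Z)%C = S).
  { apply (sumZ_shift1 N (fun i => a i * e i)%C). intros. rewrite Ha, He; auto. }
  assert (Hdiff : (S * (1 - w))%C = (w * sumZ N (fun i => (a (i + 1)%Z - a i) * e i))%C).
  { transitivity (sumZ N (fun i => a (i + 1)%Z * e (i + 1)%Z)%C + - w * S)%C.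
    - rewrite Hshift; ring.
    - unfold S. rewrite <- !sumZ_mul_l, <- sumZ_plus.
      apply sumZ_ext; intros. rewrite Hw. ring. }
  rewrite <- Cmod_mult, Hdiff, Cmod_mult, Hw1, Rmult_1_l.
  eapply Rle_trans; [apply Cmod_sumZ|]. apply sumZR_le; intros.
  rewrite Cmod_mult, He1, <- RtoC_minus, Cmod_R. lra.
Qed.

Lemma Cmod_dft_mul_freq_le X Y N M (Jg : gridR) L k l :
  0 < X -> (0 < N)%nat ->
  (forall i j, Jg (i + Z.of_nat N)%Z j = Jg i j) ->
  (forall i j, (1 <= i <= Z.of_nat N)%Z -> (1 <= j <= Z.of_nat M)%Z ->
     Rabs (Jg (i + 1)%Z j - Jg i j) <= L * hstep X N) ->
  (2 * Z.abs k <= Z.of_nat N)%Z ->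
  Cmod (dft X Y N M (toC Jg) k l) * (PI * Rabs (IZR k) / (2 * INR N))
  <= INR M * (INR N * (L * hstep X N)).
Proof.
  intros HX HN HJ HLip Hk.
  assert (HD : 0 <= PI * Rabs (IZR k) / (2 * INR N)).
  { assert (HPI := PI_RGT_0). assert (0 < INR N) by (apply lt_0_INR; lia).
    assert (0 <= Rabs (IZR k)) by apply Rabs_pos. apply Rdiv_le_0_compat; nra. }
  unfold dft, sumS, toC. rewrite sumZ_swap.
  eapply Rle_trans; [apply Rmult_le_compat_r; [auto|apply Cmod_sumZ]|].
  rewrite Rmult_comm, <- sumZR_mul_l, <- sumZR_const. apply sumZR_le; intros j Hj.
  rewrite (sumZ_ext _ _ (fun i => cwave Y M l j * (Jg i j * cwave X N k i)))%C by (intros; ring).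
  rewrite sumZ_mul_l, Cmod_mult, Cmod_cis, Rmult_1_l, Rmult_comm.
  eapply Rle_trans.
  - apply Rmult_le_compat_l; [apply Cmod_ge_0|]. apply (Cmod_1_minus_cis_lower N k); auto.
  - rewrite <- sumZR_const.
    eapply Rle_trans; [apply (abel_summation_bound N (fun i => Jg i j) (fun i => cwave X N k i))|].
    + intros; apply HJ.
    + intros; apply cwave_add_period; auto.
    + intros. rewrite cis_add. f_equal.
      unfold node, hstep. rewrite plus_IZR. field. split; [apply not_0_INR; lia|lra].
    + intros; apply Cmod_cis.
    + apply Cmod_cis.
    + apply sumZR_le; intros. apply HLip; auto.
Qed.

(* With [h_x = 2X/N_x], [h_y = 2Y/N_y], the previous bound turns into [16 X Y L]. *)
Lemma dft_decay X Y N M (Jg : gridR) L k l :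
  0 < X -> 0 < Y -> (0 < N)%nat -> (0 < M)%nat ->
  (forall i j, Jg (i + Z.of_nat N)%Z j = Jg i j) ->
  (forall i j, (1 <= i <= Z.of_nat N)%Z -> (1 <= j <= Z.of_nat M)%Z ->
     Rabs (Jg (i + 1)%Z j - Jg i j) <= L * hstep X N) ->
  (2 * Z.abs k <= Z.of_nat N)%Z ->
  Rabs (IZR k * PI / X) * (hstep X N * hstep Y M * Cmod (dft X Y N M (toC Jg) k l))
  <= 16 * X * Y * L.
Proof.
  intros HX HY HN HM HJ HLip Hk.
  assert (HNR : 0 < INR N) by (apply lt_0_INR; lia).
  assert (HMR : 0 < INR M) by (apply lt_0_INR; lia).
  assert (Hh : 0 <= 2 * INR N * (hstep X N * hstep Y M) / X).
  { unfold hstep. apply Rdiv_le_0_compat; [|lra].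
    apply Rmult_le_pos; [lra|]. apply Rmult_le_pos; apply Rdiv_le_0_compat; lra. }
  replace (Rabs (IZR k * PI / X) * (hstep X N * hstep Y M * Cmod (dft X Y N M (toC Jg) k l)))
    with (2 * INR N * (hstep X N * hstep Y M) / X *
          (Cmod (dft X Y N M (toC Jg) k l) * (PI * Rabs (IZR k) / (2 * INR N)))).
  2:{ unfold Rdiv. rewrite !Rabs_mult, (Rabs_pos_eq PI), (Rabs_pos_eq (/ X)).
      - field. lra.
      - left; apply Rinv_0_lt_compat; auto.
      - left; apply PI_RGT_0. }
  eapply Rle_trans; [apply Rmult_le_compat_l; [auto|apply (Cmod_dft_mul_freq_le X Y N M Jg L)]|];
    auto.
  right. unfold hstep. field. lra.
Qed.

(** * C^1 functions are Lipschitz on compact boxes *)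

Lemma continuous_bounded_on_rectangle (F : R -> R -> R) :
  (forall p : R * R, continuous (fun q : R * R => F (fst q) (snd q)) p) ->
  forall a b c d, exists B, forall x y, a <= x <= b -> c <= y <= d -> Rabs (F x y) <= B.
Proof.
  intros HF a b c d.
  assert (Hdelta : forall t : Compactness.Tn 2 R, {e : posreal | forall x y,
      Rabs (x - fst t) < e -> Rabs (y - fst (snd t)) < e ->
      Rabs (F x y - F (fst t) (fst (snd t))) < 1}).
  { intros [t1 [t2 u]]. apply constructive_indefinite_description. simpl.
    assert (H := HF (t1, t2)). unfold continuous in H. rewrite filterlim_locally in H.
    destruct (H (mkposreal 1 Rlt_0_1)) as [e He]. exists e. intros x y Hx Hy.
    apply (He (x, y)). split; simpl; auto. }
  (* Coquelicot provides the finite subcover only under a double negation. *)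
  apply NNPP. intro Hno.
  apply (compactness_list 2 (a, (c, tt)) (b, (d, tt)) (fun t => proj1_sig (Hdelta t))).
  intros [l Hl]. apply Hno.
  set (bound := fun t : Compactness.Tn 2 R => Rabs (F (fst t) (fst (snd t))) + 1).
  exists (fold_right (fun t acc => Rmax acc (bound t)) 0 l).
  intros x y Hx Hy.
  destruct (Hl (x, (y, tt))) as [t [Hin [_ Hcl]]]; [simpl; auto|].
  assert (Hclose : Rabs (F x y - F (fst t) (fst (snd t))) < 1).
  { destruct t as [t1 [t2 u]]. simpl in Hcl. destruct Hcl as [H1 [H2 _]].
    apply (proj2_sig (Hdelta (t1, (t2, u))) x y H1 H2). }
  assert (Hmax : forall l0 t0, In t0 l0 ->
            bound t0 <= fold_right (fun t acc => Rmax acc (bound t)) 0 l0).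
  { induction l0 as [|t1 l0 IH]; simpl; intros t0 Hi; [contradiction|].
    destruct Hi as [<-|Hi]; [apply Rmax_r|].
    eapply Rle_trans; [apply IH; eauto|apply Rmax_l]. }
  assert (Ht := Hmax l t Hin). unfold bound at 1 in Ht.
  assert (Rabs (F x y) <= Rabs (F (fst t) (fst (snd t))) + Rabs (F x y - F (fst t) (fst (snd t)))).
  { replace (F x y) with (F (fst t) (fst (snd t)) + (F x y - F (fst t) (fst (snd t)))) at 1
      by ring. apply Rabs_triang. }
  lra.
Qed.

Lemma increment_le_derive_bound (f f' : R -> R) a h B : 0 <= h ->
  (forall t, is_derive f t (f' t)) -> (forall t, a <= t <= a + h -> Rabs (f' t) <= B) ->
  Rabs (f (a + h) - f a) <= B * h.
Proof.
  intros Hh Hd Hb.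
  destruct (MVT_gen f a (a + h) f') as [c [Hc ->]].
  - intros; apply Hd.
  - intros t _. apply continuity_pt_filterlim, (ex_derive_continuous f).
    exists (f' t); apply Hd.
  - rewrite Rmin_left in Hc by lra. rewrite Rmax_right in Hc by lra.
    replace (a + h - a) with h by ring. rewrite Rabs_mult, (Rabs_pos_eq h) by lra.
    apply Rmult_le_compat_r; [lra|]. apply Hb; lra.
Qed.

Lemma C1per_lipschitz X Y J : 0 < X -> 0 < Y -> C1per X Y J ->
  exists L,
  (forall x y h, -X <= x <= X -> -Y <= y <= Y -> 0 <= h <= 2 * X ->
     Rabs (J (x + h) y - J x y) <= L * h) /\
  (forall x y h, -X <= x <= X -> -Y <= y <= Y -> 0 <= h <= 2 * Y ->
     Rabs (J x (y + h) - J x y) <= L * h).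
Proof.
  intros HX HY [_ [Jx [Jy [HdX [HdY [HcX [HcY _]]]]]]].
  destruct (continuous_bounded_on_rectangle Jx HcX (-X) (3 * X) (-Y) Y) as [Bx HBx].
  destruct (continuous_bounded_on_rectangle Jy HcY (-X) X (-Y) (3 * Y)) as [By HBy].
  exists (Rmax Bx By). split.
  - intros x y h Hx Hy Hh.
    apply (increment_le_derive_bound (fun t => J t y) (fun t => Jx t y)); [lra|auto|].
    intros t Ht. eapply Rle_trans; [apply HBx; lra|apply Rmax_l].
  - intros x y h Hx Hy Hh.
    apply (increment_le_derive_bound (fun t => J x t) (fun t => Jy x t)); [lra|auto|].
    intros t Ht. eapply Rle_trans; [apply HBy; lra|apply Rmax_r].
Qed.

Lemma young_coef_bound A B p q j K al :
  0 <= A -> 0 <= B -> 0 <= p -> 0 <= q -> 0 <= j -> 0 < al -> A * j <= K -> B * j <= K ->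
  (A * A + B * B) * q * (j * p) <= al * p ^ 2 + K * K / (2 * al) * ((A * q) ^ 2 + (B * q) ^ 2).
Proof.
  intros HA HB Hp Hq Hj Hal HAK HBK.
  assert (Hlin : (A * A + B * B) * q * (j * p) <= (A + B) * K * q * p).
  { assert (A * (A * j) <= A * K) by (apply Rmult_le_compat_l; auto).
    assert (B * (B * j) <= B * K) by (apply Rmult_le_compat_l; auto).
    assert (0 <= q * p) by nra. nra. }
  assert (Hamgm : (A + B) * K * q * p <= al * p ^ 2 + ((A + B) * K * q) ^ 2 / (4 * al)).
  { set (Q := (A + B) * K * q).
    assert (0 <= (2 * al * p - Q) ^ 2) by apply pow2_ge_0.
    apply Rmult_le_reg_r with (4 * al); [lra|].
    replace ((al * p ^ 2 + Q ^ 2 / (4 * al)) * (4 * al)) with (4 * al * al * p ^ 2 + Q ^ 2)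
      by (field; lra).
    nra. }
  assert (Hsq : ((A + B) * K * q) ^ 2 / (4 * al) <=
                K * K / (2 * al) * ((A * q) ^ 2 + (B * q) ^ 2)).
  { replace (((A + B) * K * q) ^ 2 / (4 * al))
      with (K * K / (2 * al) * ((A + B) ^ 2 * q ^ 2 / 2)) by (field; lra).
    apply Rmult_le_compat_l; [apply Rdiv_le_0_compat; nra|].
    assert (0 <= (A - B) ^ 2 * q ^ 2) by (apply Rmult_le_pos; apply pow2_ge_0). nra. }
  lra.
Qed.

Section ConvolutionLaplacian.
Variables (X Y : R) (N M : nat).
Hypotheses (HX : 0 < X) (HY : 0 < Y) (HN : (0 < N)%nat) (HM : (0 < M)%nat).
Variables (Jg : gridR) (K : R).
Hypotheses (HJx : forall i j, Jg (i + Z.of_nat N)%Z j = Jg i j)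
           (HJy : forall i j, Jg i (j + Z.of_nat M)%Z = Jg i j)
           (HKx : forall k l, inShat N M k l ->
              Rabs (IZR k * PI / X) *
              (hstep X N * hstep Y M * Cmod (dft X Y N M (toC Jg) k l)) <= K)
           (HKy : forall k l, inShat N M k l ->
              Rabs (IZR l * PI / Y) *
              (hstep X N * hstep Y M * Cmod (dft X Y N M (toC Jg) k l)) <= K).

Lemma Cmod_conv_lap_coef (f g : gridR) al k l : 0 < al -> inShat N M k l ->
  Cmod (Cconj (RtoC (- ((IZR k * PI / X) ^ 2 + (IZR l * PI / Y) ^ 2)) *
               dft X Y N M (toC g) k l) *
        dft X Y N M (toC (convN X Y N M Jg f)) k l)
  <= al * Cmod (dft X Y N M (toC f) k l) ^ 2 +
     K * K / (2 * al) *
     (Cmod (Cmult (0, IZR k * PI / X) (dft X Y N M (toC g) k l)) ^ 2 +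
      Cmod (Cmult (0, IZR l * PI / Y) (dft X Y N M (toC g) k l)) ^ 2).
Proof.
  intros Hal Hkl.
  assert (Hh : 0 <= hstep X N * hstep Y M)
    by (apply Rmult_le_pos; apply Rdiv_le_0_compat; try lra; apply lt_0_INR; lia).
  assert (Cmod_im : forall a z, Cmod (Cmult (0, a) z) = Rabs a * Cmod z).
  { intros a z. rewrite Cmod_mult. f_equal. unfold Cmod; simpl.
    rewrite <- sqrt_Rsqr_abs. f_equal. unfold Rsqr. ring. }
  set (A := Rabs (IZR k * PI / X)). set (B := Rabs (IZR l * PI / Y)).
  assert (Hmult : Cmod (Cconj (RtoC (- ((IZR k * PI / X) ^ 2 + (IZR l * PI / Y) ^ 2)) *
                               dft X Y N M (toC g) k l))
                  = (A * A + B * B) * Cmod (dft X Y N M (toC g) k l)).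
  { rewrite Cmod_conj, Cmod_mult, Cmod_R, Rabs_Ropp, Rabs_pos_eq
      by (apply Rplus_le_le_0_compat; apply pow2_ge_0).
    unfold A, B. rewrite <- !Rabs_mult, !Rabs_pos_eq by apply Rle_0_sqr. f_equal; ring. }
  assert (Hconv : Cmod (dft X Y N M (toC (convN X Y N M Jg f)) k l)
                  = hstep X N * hstep Y M * Cmod (dft X Y N M (toC Jg) k l) *
                    Cmod (dft X Y N M (toC f) k l)).
  { rewrite dft_convN, !Cmod_mult, !Cmod_cis, Cmod_R, Rabs_pos_eq by auto. ring. }
  rewrite Cmod_mult, Hmult, Hconv, !Cmod_im. fold A B.
  apply young_coef_bound; try apply Rabs_pos; try apply Cmod_ge_0; auto.
  - apply Rmult_le_pos; [auto|apply Cmod_ge_0].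
  - apply HKx; auto.
  - apply HKy; auto.
Qed.

Lemma ipN_convN_LapN_le (f g : gridR) al : 0 < al ->
  Cmod (ipN X Y N M (toC (convN X Y N M Jg f)) (LapN X Y N M (toC g)))
  <= al * nrm2sq X Y N M (toC f) + K * K / (2 * al) * grad_nrm2sq X Y N M g.
Proof.
  intros Hal.
  assert (Hc : 0 <= hstep X N * hstep Y M / (INR N * INR M)).
  { assert (0 < INR N) by (apply lt_0_INR; lia). assert (0 < INR M) by (apply lt_0_INR; lia).
    unfold hstep. apply Rdiv_le_0_compat; [|nra].
    apply Rmult_le_pos; apply Rdiv_le_0_compat; lra. }
  erewrite ipN_ext_in by (intros; apply LapN_spec_op; auto).
  rewrite ipN_spec_op, Cmod_mult, Cmod_R, Rabs_pos_eq by auto.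
  unfold grad_nrm2sq, DxN, DyN. rewrite nrm2sq_dft, !nrm2sq_spec_op by auto.
  eapply Rle_trans; [apply Rmult_le_compat_l; [auto|apply Cmod_sumShat]|].
  eapply Rle_trans.
  - apply Rmult_le_compat_l; [auto|]. apply sumShatR_le; intros.
    apply (Cmod_conv_lap_coef f g al); auto.
  - rewrite sumShatR_plus, !sumShatR_mul_l, sumShatR_plus. right; ring.
Qed.

End ConvolutionLaplacian.

Lemma node_in_box L N i : 0 < L -> (0 < N)%nat -> (1 <= i <= Z.of_nat N)%Z ->
  -L <= node L N i <= L.
Proof.
  intros HL HN Hi. assert (HNR : 0 < INR N) by (apply lt_0_INR; lia).
  assert (1 <= IZR i <= INR N) by (rewrite INR_IZR_INZ; split; apply IZR_le; lia).
  unfold node, hstep.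
  replace (IZR i * (2 * L / INR N)) with (2 * L * (IZR i / INR N)) by (field; lra).
  assert (0 <= IZR i / INR N <= 1).
  { split; [apply Rdiv_le_0_compat; lra|].
    apply Rmult_le_reg_r with (INR N); auto. unfold Rdiv. rewrite Rmult_assoc, Rinv_l; lra. }
  nra.
Qed.

Lemma dft_transpose X Y N M u k l : dft X Y N M u k l = dft Y X M N (fun j i => u i j) l k.
Proof.
  unfold dft, sumS. rewrite sumZ_swap. apply sumZ_ext; intros; apply sumZ_ext; intros. ring.
Qed.

Lemma grid_restr_add_period X Y N M J i j : (0 < N)%nat ->
  (forall x y, J (x + 2 * X) y = J x y) ->
  grid_restr X Y N M J (i + Z.of_nat N)%Z j = grid_restr X Y N M J i j.
Proof. intros HN HJ. unfold grid_restr. rewrite node_add_period; auto. Qed.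

Lemma grid_restr_dft_decay X Y N M J L k l :
  0 < X -> 0 < Y -> (0 < N)%nat -> (0 < M)%nat ->
  (forall x y, J (x + 2 * X) y = J x y) ->
  (forall x y h, -X <= x <= X -> -Y <= y <= Y -> 0 <= h <= 2 * X ->
     Rabs (J (x + h) y - J x y) <= L * h) ->
  (2 * Z.abs k <= Z.of_nat N)%Z ->
  Rabs (IZR k * PI / X) *
  (hstep X N * hstep Y M * Cmod (dft X Y N M (toC (grid_restr X Y N M J)) k l))
  <= 16 * X * Y * L.
Proof.
  intros HX HY HN HM Hper HLip Hk. apply dft_decay; auto.
  - intros. apply grid_restr_add_period; auto.
  - intros i j Hi Hj. unfold grid_restr.
    replace (node X N (i + 1)) with (node X N i + hstep X N)
      by (unfold node; rewrite plus_IZR; ring).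
    apply HLip; try apply node_in_box; auto.
    split; [apply Rdiv_le_0_compat; [lra|apply lt_0_INR; auto]|].
    unfold hstep. apply Rmult_le_reg_r with (INR N); [apply lt_0_INR; auto|].
    assert (1 <= INR N) by (apply (le_INR 1); lia).
    unfold Rdiv. rewrite Rmult_assoc, Rinv_l; nra.
Qed.

Lemma nrm2sq_nonneg X Y N M u : 0 < X -> 0 < Y -> (0 < N)%nat -> (0 < M)%nat ->
  0 <= nrm2sq X Y N M u.
Proof.
  intros HX HY HN HM. assert (0 < INR N) by (apply lt_0_INR; auto).
  assert (0 < INR M) by (apply lt_0_INR; auto).
  unfold nrm2sq, hstep. apply Rmult_le_pos.
  - apply Rmult_le_pos; apply Rdiv_le_0_compat; lra.
  - rewrite <- (Rmult_0_r (INR N)), <- sumZR_const. apply sumZR_le; intros.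
    rewrite <- (Rmult_0_r (INR M)), <- sumZR_const. apply sumZR_le; intros.
    apply pow2_ge_0.
Qed.

Lemma ipN_conv_grid_restr_LapN_le X Y J L N M (f g : gridR) al :
  0 < X -> 0 < Y -> (0 < N)%nat -> Nat.Even N -> (0 < M)%nat -> Nat.Even M -> 0 < al ->
  (forall x y, J (x + 2 * X) y = J x y /\ J x (y + 2 * Y) = J x y) ->
  (forall x y h, -X <= x <= X -> -Y <= y <= Y -> 0 <= h <= 2 * X ->
     Rabs (J (x + h) y - J x y) <= L * h) ->
  (forall x y h, -X <= x <= X -> -Y <= y <= Y -> 0 <= h <= 2 * Y ->
     Rabs (J x (y + h) - J x y) <= L * h) ->
  Cmod (ipN X Y N M (toC (convN X Y N M (grid_restr X Y N M J) f)) (LapN X Y N M (toC g)))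
  <= al * nrm2sq X Y N M (toC f) +
     (16 * X * Y * L) * (16 * X * Y * L) / (2 * al) * grad_nrm2sq X Y N M g.
Proof.
  intros HX HY HN HEN HM HEM Hal Hper HLx HLy.
  apply ipN_convN_LapN_le; auto.
  - intros. apply grid_restr_add_period; [auto|intros; apply Hper].
  - intros. apply (grid_restr_add_period Y X M N (fun y x => J x y)); [auto|intros; apply Hper].
  - intros k l Hkl. apply grid_restr_dft_decay; auto.
    + intros; apply Hper.
    + apply (inShat_bound N M k l); auto.
  - intros k l Hkl. rewrite dft_transpose, (Rmult_comm (hstep X N)).
    replace (16 * X * Y * L) with (16 * Y * X * L) by ring.
    apply (grid_restr_dft_decay Y X M N (fun y x => J x y)); auto.
    + intros; apply Hper.
    + apply (inShat_bound N M k l); auto.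
Qed.

Theorem lemma2p2 (X Y : R) (J : R -> R -> R) :
  0 < X -> 0 < Y -> C1per X Y J ->
  exists Cst : R, 0 < Cst /\
    forall (Nx Ny : nat), (0 < Nx)%nat -> Nat.Even Nx -> (0 < Ny)%nat -> Nat.Even Ny ->
    forall f g : gridR, periodic_grid Nx Ny f -> periodic_grid Nx Ny g ->
    forall alpha : R, 0 < alpha ->
      Cmod (ipN X Y Nx Ny (toC (convN X Y Nx Ny (grid_restr X Y Nx Ny J) f))
                (LapN X Y Nx Ny (toC g)))
      <= alpha * nrm2sq X Y Nx Ny (toC f) + Cst / alpha * grad_nrm2sq X Y Nx Ny g.
Proof.
  intros HX HY HJ.
  destruct (C1per_lipschitz X Y J HX HY HJ) as [L [HLx HLy]].
  destruct HJ as [Hper _].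
  set (K := 16 * X * Y * L).
  exists (K * K / 2 + 1). split; [nra|].
  intros N M HN HEN HM HEM f g _ _ al Hal.
  eapply Rle_trans; [apply ipN_conv_grid_restr_LapN_le; eauto|]. fold K.
  apply Rplus_le_compat_l, Rmult_le_compat_r.
  - unfold grad_nrm2sq. apply Rplus_le_le_0_compat; apply nrm2sq_nonneg; auto.
  - replace (K * K / (2 * al)) with (K * K / 2 / al) by (field; lra).
    apply Rmult_le_compat_r; [left; apply Rinv_0_lt_compat; auto|lra].
Qed.
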